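(* A ring $R$ has the $2$-nil-sum property if and only if either $R$ is a simple ring with the $2$-nil-sum property, or $R$ is a commutative local ring whose Jacobson radical is nil.
   Context: All rings are associative with identity. A central unit of $R$ is a unit of $R$ lying in the center of $R$; a non central-unit is an element that is not a central unit. A ring $R$ has the $2$-nil-sum property if every non central-unit of $R$ is a sum of two nilpotent elements of $R$. *)

From mathcomp Require Import all_boot all_order all_algebra.
Set Implicit Arguments. Unset Strict Implicit. Unset Printing Implicit Defensive.
Import GRing.Theory.
Local Open Scope ring_scope.

Section Defs.
Variable R : nzRingType.

Definition is_central (x : R) : Prop := forall y : R, x * y = y * x.
Definition is_unit (x : R) : Prop := exists y : R, x * y = 1 /\ y * x = 1.
Definition central_unit (x : R) : Prop := is_central x /\ is_unit x.
Definition is_nilpotent (x : R) : Prop := exists n : nat, x ^+ n = 0.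

Definition two_nil_sum : Prop :=
  forall x : R, ~ central_unit x ->
    exists a b : R, is_nilpotent a /\ is_nilpotent b /\ x = a + b.

Definition additive_subgroup (I : R -> Prop) : Prop :=
  I 0 /\ (forall x y, I x -> I y -> I (x - y)).
Definition left_ideal (I : R -> Prop) : Prop :=
  additive_subgroup I /\ (forall r x, I x -> I (r * x)).
Definition two_sided_ideal (I : R -> Prop) : Prop :=
  left_ideal I /\ (forall r x, I x -> I (x * r)).

(* simple ring: nonzero (built into nzRingType) with only trivial two-sided ideals *)
Definition simple_ring : Prop :=
  forall I, two_sided_ideal I -> (forall x, I x -> x = 0) \/ (forall x, I x).

Definition comm_ring : Prop := forall x y : R, x * y = y * x.

Definition maximal_left_ideal (M : R -> Prop) : Prop :=
  left_ideal M /\ ~ M 1 /\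
  forall J, left_ideal J -> (forall x, M x -> J x) ->
     (forall x, J x -> M x) \/ (forall x, J x).

Definition local_ring : Prop :=
  exists M, maximal_left_ideal M /\
    forall N, maximal_left_ideal N -> forall x, N x <-> M x.

Definition jacobson (x : R) : Prop :=
  forall M, maximal_left_ideal M -> M x.

Definition jacobson_nil : Prop := forall x, jacobson x -> is_nilpotent x.
End Defs.

From mathcomp Require Import all_boot all_order all_algebra.
From mathcomp Require Import zify.
From Stdlib Require Import Classical.
Set Implicit Arguments. Unset Strict Implicit. Unset Printing Implicit Defensive.
Import GRing.Theory.
Local Open Scope ring_scope.

(* Forward direction, R not simple.  A proper nonzero ideal I is central
   (two_nil_sum_ideal_central), so its left annihilator A is a proper ideal
   containing every commutator, i.e. R / A is commutative.  Modulo such an A,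
   sums of nilpotents are nilpotent (nil_modD, a binomial expansion carried
   out as a congruence modulo A); writing 1 = (1 + x) - x with x, 1 + x
   non-central would then put 1 in A, so R is commutative
   (commutative_of_commutator_ideal).  In a commutative 2-nil-sum ring every
   nonunit is nilpotent, so the nilradical is the unique maximal ideal and it
   is the Jacobson radical (comm_local_jacobson_nil).

   Backward direction.  In a commutative local ring with nil Jacobson radical
   every nonunit lies in the maximal ideal, hence is nilpotent
   (local_nonunit_nilpotent), and x = x + 0. *)

Section Ideals.
Variables (R : nzRingType) (I : R -> Prop).
Hypothesis idealI : two_sided_ideal I.

Lemma ideal0 : I 0.
Proof. by case: idealI => [[[]]]. Qed.

Lemma idealB x y : I x -> I y -> I (x - y).
Proof. by case: idealI => [[[_ closedB] _] _]; apply: closedB. Qed.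

Lemma idealN x : I x -> I (- x).
Proof. by move=> Ix; rewrite -sub0r; apply: idealB => //; apply: ideal0. Qed.

Lemma idealD x y : I x -> I y -> I (x + y).
Proof. by move=> Ix Iy; rewrite -[y]opprK; apply/idealB/idealN. Qed.

Lemma ideal_lmul r x : I x -> I (r * x).
Proof. by case: idealI => [[_ closedMl] _]; apply: closedMl. Qed.

Lemma ideal_rmul r x : I x -> I (x * r).
Proof. by case: idealI => _ closedMr; apply: closedMr. Qed.

Lemma ideal_unit u : is_unit u -> I u -> I 1.
Proof. by case=> v [_ vu1] Iu; rewrite -vu1; apply: ideal_lmul. Qed.

Lemma ideal1_full : I 1 -> forall x, I x.
Proof. by move=> I1 x; rewrite -[x]mulr1; apply: ideal_lmul. Qed.

Lemma ideal_exprD z i n : I i -> I ((z + i) ^+ n - z ^+ n).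
Proof.
move=> Ii; elim: n => [|n IHn]; first by rewrite subrr; apply: ideal0.
have -> : (z + i) ^+ n.+1 - z ^+ n.+1 =
          z ^+ n * i + ((z + i) ^+ n - z ^+ n) * (z + i).
  rewrite !exprSr mulrBl !mulrDr opprD addrA addrC !addrA addrNK.
  by rewrite [LHS]addrC addrA.
by apply: idealD; [apply: ideal_lmul | apply: ideal_rmul].
Qed.

End Ideals.

Section UnitsAndNilpotents.
Variable R : nzRingType.
Implicit Types a u : R.

(* A two-sided inverse commutes with its element, so powers of units are units. *)
Lemma unitX u n : is_unit u -> is_unit (u ^+ n).
Proof.
case=> v [uv1 vu1]; exists (v ^+ n).
have cuv : GRing.comm u v by rewrite /GRing.comm uv1 vu1.
by rewrite -!exprMn_comm // ?uv1 ?vu1 expr1n.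
Qed.

Lemma nilpotentN a : is_nilpotent a -> is_nilpotent (- a).
Proof. by case=> n an0; exists n; rewrite exprNn an0 mulr0. Qed.

(* Geometric series: if a^n = 0 then 1 - a has inverse 1 + a + ... + a^(n-1). *)
Lemma nilpotent_unit1B a : is_nilpotent a -> is_unit (1 - a).
Proof.
case=> n an0; pose s := \sum_(k < n) a ^+ k.
have inv_r : (1 - a) * s = 1.
  by rewrite -opprB mulNr -subrX1 an0 sub0r opprK.
have cas : GRing.comm (1 - a) s.
  apply: commr_sum => k _; apply/commrX/commr_sym.
  exact: commrB (commr1 a) (commr_refl a).
by exists s; rewrite -cas inv_r.
Qed.

Lemma central1D (x : R) : is_central (1 + x) -> is_central x.
Proof. by move=> c1x y; have := c1x y; rewrite mulrDl mulrDr mul1r mulr1 => /addrI. Qed.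

End UnitsAndNilpotents.

(* In a 2-nil-sum ring every proper ideal I is central: for i in I, 1 + i is a
   central unit, since otherwise 1 + i = a + b with a, b nilpotent, and then
   0 = b^q = (1 - a)^q mod I would put the unit (1 - a)^q into I. *)
Lemma two_nil_sum_ideal_central (R : nzRingType) (I : R -> Prop) :
  two_nil_sum R -> two_sided_ideal I -> ~ I 1 -> forall i, I i -> is_central i.
Proof.
move=> nilsum idealI notI1 i Ii.
have [central_1i _] : central_unit (1 + i).
  apply: NNPP => /nilsum [a [b [nil_a [[q bq0] Eab]]]].
  have Eb : b = (1 - a) + i by rewrite addrAC Eab addrC addKr.
  have I_1aq : I ((1 - a) ^+ q).
    have := ideal_exprD idealI (1 - a) q Ii.
    by rewrite -Eb bq0 sub0r => /(idealN idealI); rewrite opprK.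
  exact/notI1/(ideal_unit idealI (unitX q (nilpotent_unit1B nil_a))).
exact: central1D.
Qed.

Definition congr_mod (R : nzRingType) (A : R -> Prop) (x y : R) : Prop := A (x - y).

Definition nil_mod (R : nzRingType) (A : R -> Prop) (x : R) : Prop :=
  exists n, A (x ^+ n).

Section CommutatorIdeal.
Variables (R : nzRingType) (A : R -> Prop).
Hypothesis idealA : two_sided_ideal A.
Hypothesis commA : forall x y, A (x * y - y * x).
Local Notation "x == y 'mod' 'A'" := (congr_mod A x y) (at level 70, y at next level).

Lemma congr_refl x : x == x mod A.
Proof. by rewrite /congr_mod subrr; apply: ideal0. Qed.

Lemma congr_trans y x z : x == y mod A -> y == z mod A -> x == z mod A.
Proof. by move=> xy yz; rewrite /congr_mod -(subrK y x) -addrA; apply: idealD. Qed.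

Lemma congrD x y x' y' : x == y mod A -> x' == y' mod A -> x + x' == y + y' mod A.
Proof. by move=> xy xy'; rewrite /congr_mod opprD addrACA; apply: idealD. Qed.

Lemma congrMl r x y : x == y mod A -> r * x == r * y mod A.
Proof. by move=> xy; rewrite /congr_mod -mulrBr; apply: ideal_lmul. Qed.

Lemma congrMr r x y : x == y mod A -> x * r == y * r mod A.
Proof. by move=> xy; rewrite /congr_mod -mulrBl; apply: ideal_rmul. Qed.

(* Modulo A, (u + v)^(i + j) lies in the left ideal generated by u^i and v^j:
   this is the binomial expansion in the commutative ring R / A. *)
Lemma exprD_congr u v n i j : (i + j = n)%N ->
  exists r s, (u + v) ^+ n == r * u ^+ i + s * v ^+ j mod A.
Proof.
elim: n => [|n IHn] in i j *; move=> Eij.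
  have [-> ->] : i = 0%N /\ j = 0%N by lia.
  by exists 1, 0; rewrite mul0r addr0 !expr0 mulr1; apply: congr_refl.
case: i Eij => [|i] Eij.
  by exists ((u + v) ^+ n.+1), 0; rewrite mul0r addr0 expr0 mulr1; apply: congr_refl.
case: j Eij => [|j] Eij.
  by exists 0, ((u + v) ^+ n.+1); rewrite mul0r add0r expr0 mulr1; apply: congr_refl.
have [r1 [s1 E1]] := IHn i j.+1 ltac:(lia).
have [r2 [s2 E2]] := IHn i.+1 j ltac:(lia).
have Eu : (u + v) ^+ n * u == r1 * u ^+ i.+1 + s1 * u * v ^+ j.+1 mod A.
  apply: congr_trans (congrMr u E1) _; rewrite mulrDl -!mulrA -exprSr.
  by apply: congrD; [apply: congr_refl | apply/congrMl/commA].
have Ev : (u + v) ^+ n * v == r2 * v * u ^+ i.+1 + s2 * v ^+ j.+1 mod A.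
  apply: congr_trans (congrMr v E2) _; rewrite mulrDl -!mulrA -exprSr.
  by apply: congrD; [apply/congrMl/commA | apply: congr_refl].
exists (r1 + r2 * v), (s1 * u + s2).
by rewrite !mulrDl addrACA exprSr mulrDr; apply: congrD.
Qed.

Lemma nilpotent_nil_mod x : is_nilpotent x -> nil_mod A x.
Proof. by case=> n xn0; exists n; rewrite xn0; apply: ideal0. Qed.

Lemma nil_modD u v : nil_mod A u -> nil_mod A v -> nil_mod A (u + v).
Proof.
case=> p Aup [q Avq]; exists (p + q)%N.
have [r [s E]] := exprD_congr u v (erefl (p + q)%N).
have Ars : A (r * u ^+ p + s * v ^+ q).
  by apply: (idealD idealA); apply: (ideal_lmul idealA).
rewrite -(subrK (r * u ^+ p + s * v ^+ q) ((u + v) ^+ (p + q))).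
exact: (idealD idealA).
Qed.

End CommutatorIdeal.

(* A 2-nil-sum ring with a proper ideal A such that R / A is commutative is
   itself commutative: if x does not commute with y, then neither x nor 1 + x
   is central, so both are sums of two nilpotents, and 1 = (1 + x) - x becomes
   a sum of four elements nilpotent modulo A, forcing 1 \in A. *)
Lemma commutative_of_commutator_ideal (R : nzRingType) (A : R -> Prop) :
  two_nil_sum R -> two_sided_ideal A -> ~ A 1 ->
  (forall x y, A (x * y - y * x)) -> comm_ring R.
Proof.
move=> nilsum idealA notA1 commA x y; apply: NNPP => nxy.
have [a [b [nil_a [nil_b Ex]]]] : exists a b,
    is_nilpotent a /\ is_nilpotent b /\ x = a + b.
  by apply: nilsum => -[cx _]; apply/nxy/cx.
have [a' [b' [nil_a' [nil_b' E1x]]]] : exists a b,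
    is_nilpotent a /\ is_nilpotent b /\ 1 + x = a + b.
  by apply: nilsum => -[/central1D cx _]; apply/nxy/cx.
have E1 : 1 = (a' + b') + (- a + - b) by rewrite -E1x Ex -opprD addrK.
have nil_Na := nilpotentN nil_a; have nil_Nb := nilpotentN nil_b.
have [n] : nil_mod A 1.
  rewrite E1; apply: (nil_modD idealA commA); apply: (nil_modD idealA commA);
  by apply: (nilpotent_nil_mod idealA).
by rewrite expr1n.
Qed.

Definition left_annihilator (R : nzRingType) (I : R -> Prop) (r : R) : Prop :=
  forall i, I i -> r * i = 0.

Section Annihilator.
Variables (R : nzRingType) (I : R -> Prop).
Hypothesis left_idealI : left_ideal I.

Lemma left_annihilator_ideal : two_sided_ideal (left_annihilator I).
Proof.
case: left_idealI => _ lmulI.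
split; [split; [split|] |].
- by move=> i _; rewrite mul0r.
- by move=> x y ann_x ann_y i Ii; rewrite mulrBl ann_x ?ann_y ?subrr.
- by move=> r x ann_x i Ii; rewrite -mulrA ann_x ?mulr0.
- by move=> r x ann_x i Ii; rewrite -mulrA ann_x //; apply: lmulI.
Qed.

(* If I consists of central elements, then x y i = y i x = y x i for i in I,
   so every commutator annihilates I. *)
Lemma left_annihilator_commutator :
  (forall i, I i -> is_central i) -> forall x y, left_annihilator I (x * y - y * x).
Proof.
case: left_idealI => _ lmulI centralI x y i Ii.
rewrite mulrBl -!mulrA -(centralI _ (lmulI y i Ii) x) -mulrA (centralI _ Ii x).
by rewrite subrr.
Qed.

End Annihilator.

(* A non-simple 2-nil-sum ring is commutative: a proper nonzero ideal I is
   central, so its left annihilator is a proper ideal containing all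
   commutators. *)
Lemma not_simple_commutative (R : nzRingType) :
  two_nil_sum R -> ~ simple_ring R -> comm_ring R.
Proof.
move=> nilsum not_simple.
have [I [idealI [I_nonzero I_proper]]] : exists I : R -> Prop,
    two_sided_ideal I /\ ~ (forall x, I x -> x = 0) /\ ~ (forall x, I x).
  apply: NNPP => noI; apply: not_simple => I idealI.
  by apply: NNPP => /not_or_and [nz np]; apply: noI; exists I.
have notI1 : ~ I 1 by move/(ideal1_full idealI)/I_proper.
have [i0 [Ii0 i0_neq0]] : exists i, I i /\ i <> 0.
  apply: NNPP => none; apply: I_nonzero => x Ix.
  by apply: NNPP => x_neq0; apply: none; exists x.
apply: (commutative_of_commutator_ideal nilsum (left_annihilator_ideal idealI.1)).
- by move=> ann1; apply/i0_neq0; rewrite -[i0]mul1r ann1.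
- exact: left_annihilator_commutator idealI.1
    (two_nil_sum_ideal_central nilsum idealI notI1).
Qed.

Lemma proper_left_ideal_nonunit (R : nzRingType) (J : R -> Prop) :
  left_ideal J -> ~ J 1 -> forall x, J x -> ~ is_unit x.
Proof.
move=> [_ lmulJ] notJ1 x Jx [y [_ yx1]]; apply: notJ1.
by rewrite -yx1; apply: lmulJ.
Qed.

Lemma zero_ideal (R : nzRingType) : two_sided_ideal (fun r : R => r = 0).
Proof.
split; [split; [split|] |] => //.
- by move=> x y -> ->; rewrite subrr.
- by move=> r x ->; rewrite mulr0.
- by move=> r x ->; rewrite mul0r.
Qed.

Section Commutative.
Variable R : nzRingType.
Hypothesis commR : comm_ring R.

(* In a commutative ring the zero ideal contains every commutator, so nil_modD
   says that sums of nilpotents are nilpotent. *)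
Lemma comm_nilpotentD (a b : R) :
  is_nilpotent a -> is_nilpotent b -> is_nilpotent (a + b).
Proof.
have commutator0 (x y : R) : x * y - y * x = 0 by rewrite (commR x y) subrr.
by move=> nil_a nil_b; apply: (nil_modD (zero_ideal R) commutator0 nil_a nil_b).
Qed.

Hypothesis nilsum : two_nil_sum R.

(* In a commutative ring the central units are the units, so every nonunit is
   a sum of two nilpotents, hence nilpotent. *)
Lemma comm_nonunit_nilpotent (x : R) : ~ is_unit x -> is_nilpotent x.
Proof.
move=> nonunit_x.
have [a [b [nil_a [nil_b ->]]]] : exists a b,
    is_nilpotent a /\ is_nilpotent b /\ x = a + b by apply: nilsum => -[].
exact: comm_nilpotentD.
Qed.

Lemma maximal_nilpotent (M : R -> Prop) :
  maximal_left_ideal M -> forall x, M x -> is_nilpotent x.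
Proof.
case=> idealM [notM1 _] x Mx; apply: comm_nonunit_nilpotent.
exact: proper_left_ideal_nonunit idealM notM1 x Mx.
Qed.

Lemma nilpotent_maximal : maximal_left_ideal (@is_nilpotent R).
Proof.
have nil_ideal : left_ideal (@is_nilpotent R).
  split; [split|].
  - by exists 1%N; rewrite expr1.
  - by move=> x y nil_x nil_y; apply/comm_nilpotentD/nilpotentN.
  - by move=> r x [n xn0]; exists n; rewrite exprMn_comm ?xn0 ?mulr0 //; apply: commR.
split=> //; split.
  by case=> n; rewrite expr1n; apply/eqP/oner_neq0.
move=> J idealJ nilJ; have [J1 | notJ1] := classic (J 1).
  by right; case: idealJ => _ lmulJ x; rewrite -[x]mulr1; apply: lmulJ.
left=> x Jx; apply: comm_nonunit_nilpotent.
exact: proper_left_ideal_nonunit idealJ notJ1 x Jx.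
Qed.

Lemma comm_local_jacobson_nil : local_ring R /\ jacobson_nil R.
Proof.
split; last by move=> x; apply; apply: nilpotent_maximal.
exists (@is_nilpotent R); split; first exact: nilpotent_maximal.
move=> N maxN x; split; first exact: maximal_nilpotent.
have [_ [_ maxN']] := maxN.
case: (maxN' _ nilpotent_maximal.1 (maximal_nilpotent maxN)) => [nilN | nil_all].
  exact: nilN.
by case: nilpotent_maximal => _ [/(_ (nil_all 1))].
Qed.

End Commutative.

Lemma maximal_left_ideal_comaximal (R : nzRingType) (M : R -> Prop) (x : R) :
  maximal_left_ideal M -> ~ M x -> exists m r, M m /\ m + r * x = 1.
Proof.
case=> [[[M0 subM] lmulM] [_ maxM]] notMx.
pose J z := exists m r, M m /\ z = m + r * x.
have idealJ : left_ideal J.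
  split; [split|].
  - by exists 0, 0; rewrite mul0r addr0.
  - move=> _ _ [m [r [Mm ->]]] [m' [r' [Mm' ->]]].
    exists (m - m'), (r - r'); split; first exact: subM.
    by rewrite mulrBl opprD addrACA.
  - move=> s _ [m [r [Mm ->]]]; exists (s * m), (s * r).
    by rewrite mulrDr mulrA; split; first exact: lmulM.
have MJ z : M z -> J z by exists z, 0; rewrite mul0r addr0.
case: (maxM J idealJ MJ) => [JM | J_all].
  by case: notMx; apply: JM; exists 0, 1; rewrite mul1r add0r.
by have [m [r [Mm E]]] := J_all 1; exists m, r.
Qed.

(* In a commutative local ring with nil Jacobson radical every nonunit is
   nilpotent: a nonunit x outside the maximal ideal M would give
   1 = m + r x with m nilpotent, making r x = 1 - m, hence x, a unit. *)
Lemma local_nonunit_nilpotent (R : nzRingType) :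
  comm_ring R -> local_ring R -> jacobson_nil R ->
  forall x : R, ~ is_unit x -> is_nilpotent x.
Proof.
move=> commR [M [maxM uniqM]] jnil x nonunit_x.
have M_jacobson m : M m -> jacobson m by move=> Mm N maxN; apply/(uniqM N maxN).
apply: (jnil x (M_jacobson x _)); apply: NNPP => notMx.
have [m [r [Mm Emrx]]] := maximal_left_ideal_comaximal maxM notMx.
have [w [mw1 _]] := nilpotent_unit1B (jnil m (M_jacobson m Mm)).
have Erx : r * x = 1 - m by rewrite -Emrx addrC addKr.
apply: nonunit_x; exists (r * w).
have xrw1 : x * (r * w) = 1 by rewrite mulrA (commR x r) Erx mw1.
by split; rewrite // (commR (r * w) x).
Qed.

Theorem theorem2p2 (R : nzRingType) :
  two_nil_sum R <->
  ((simple_ring R /\ two_nil_sum R) \/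
   (comm_ring R /\ local_ring R /\ jacobson_nil R)).
Proof.
split=> [nilsum | [[_ nilsum] // | [commR [localR jnil]]]].
- have [simpleR | not_simple] := classic (simple_ring R); first by left.
  have commR := not_simple_commutative nilsum not_simple.
  by right; split; last exact: comm_local_jacobson_nil.
- move=> x not_central_unit; exists x, 0.
  have nil_x : is_nilpotent x.
    apply: local_nonunit_nilpotent => // unit_x; apply: not_central_unit.
    by split=> // y; apply: commR.
  by split=> //; split; [exists 1%N; rewrite expr1 | rewrite addr0].
Qed.
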